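(* Let $P$ be a finite poset, $n\in\mathbb Z$ and $\xi\in\mathbb Z^{P^-}$. Then $T^\xi\in\omega^{(n)}$ if and only if $\xi\in S^{(n)}$. In particular $\omega^{(n)}=\bigoplus_{\xi\in S^{(n)}}\mathbb K T^\xi$.
   Context: $P^-=P\cup\{-\infty\}$ with $-\infty<z$ for all $z\in P$. For a function $\xi$ and finite $B$ in its domain, $\xi^+(B)=\sum_{b\in B}\xi(b)$. $\mathcal C(P)=\{f\in\mathbb R^P: f\ge0,\ f^+(C)\le1$ for every chain $C\}$ (chain polytope). For $f\in\mathbb Z^{P^-}$, $T^f=\prod_{x\in P^-}T_x^{f(x)}$ (Laurent monomial in indeterminates $T_x$), $\deg T^f=f(-\infty)$. For $n\in\mathbb Z$, $S^{(n)}=\{\xi\in\mathbb Z^{P^-}:\xi(x)\ge n\ \forall x\in P,\ \xi(-\infty)\ge\xi^+(C)+n$ for every maximal chain $C$ of $P\}$. $R=\mathbb K[\mathcal C(P)]=\bigoplus_{\xi\in S^{(0)}}\mathbb K T^\xi$ is the Ehrhart ring of $\mathcal C(P)$ over a field $\mathbb K$ and $\omega=\bigoplus_{\xi\in S^{(1)}}\mathbb KT^\xi$ its canonical ideal. $\omega^{(n)}$ is the $n$-th power of $\omega$ in the group of divisorial fractional ideals of $R$ (product $I\cdot J=R:_{Q(R)}(R:_{Q(R)}IJ)$); $\omega^{(0)}=R$, $\omega^{(-1)}=R:_{Q(R)}\omega$. *)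

From HB Require Import structures.
From Stdlib Require List.
From mathcomp Require Import all_boot all_order all_algebra.
Set Implicit Arguments. Unset Strict Implicit. Unset Printing Implicit Defensive.
Import Order.TTheory GRing.Theory Num.Theory.
Local Open Scope ring_scope.

Section Defs.
Variable K : fieldType.

(* Polynomial ring over K in m variables, built as iterated univariate
   polynomials: mpoly 0 = K, mpoly (k+1) = (mpoly k)[X]. *)
Fixpoint mpoly (m : nat) : idomainType :=
  match m with
  | 0 => K
  | k.+1 => {poly (mpoly k)}
  end.

Fixpoint mvar (m : nat) (i : nat) : mpoly m :=
  match m return mpoly m with
  | 0 => 1
  | k.+1 => match i with
            | 0 => ('X : {poly (mpoly k)})
            | j.+1 => ((mvar k j)%:P : {poly (mpoly k)})
            end
  end.

Fixpoint mconst (m : nat) (c : K) : mpoly m :=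
  match m return mpoly m with
  | 0 => c
  | k.+1 => ((mconst k c)%:P : {poly (mpoly k)})
  end.

(* The ambient field K(T_x : x in P^-) : fraction field of the polynomial ring. *)
Definition ratfield (m : nat) : fieldType := {fraction (mpoly m)}.

End Defs.

Section Poset.
Variables (d : Order.disp_t) (P : finPOrderType d) (K : fieldType).

(* P^- = option P, with None playing the role of -infinity. *)
Definition nvars : nat := #|{: option P}|.
Definition Fld : fieldType := ratfield K nvars.

Definition Tvar (x : option P) : Fld := @FracField.tofrac (mpoly K nvars) (@mvar K nvars (enum_rank x)).
Definition Kc (c : K) : Fld := @FracField.tofrac (mpoly K nvars) (@mconst K nvars c).

Definition Tmon (f : option P -> int) : Fld := \prod_(x : option P) Tvar x ^ f x.

Definition is_chain (C : {set P}) : Prop :=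
  forall x y, x \in C -> y \in C -> ((x <= y)%O || (y <= x)%O).
Definition is_maximal_chain (C : {set P}) : Prop :=
  is_chain C /\ forall D : {set P}, is_chain D -> C \subset D -> D = C.

Definition Sn (n : int) (xi : option P -> int) : Prop :=
  (forall x : P, n <= xi (Some x)) /\
  (forall C : {set P}, is_maximal_chain C ->
     (\sum_(b in C) xi (Some b)) + n <= xi None).

Definition monspan (S : (option P -> int) -> Prop) (q : Fld) : Prop :=
  exists s : seq (K * (option P -> int)),
    List.Forall (fun p => S p.2) s /\ q = \sum_(p <- s) Kc p.1 * Tmon p.2.

(* R = K[C(P)] and its canonical ideal omega, as subsets of the field *)
Definition Rring (q : Fld) : Prop := monspan (Sn 0) q.
Definition omega (q : Fld) : Prop := monspan (Sn 1) q.

Definition QR (q : Fld) : Prop :=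
  exists a b, Rring a /\ Rring b /\ b != 0 /\ q = a / b.

Definition colon (I : Fld -> Prop) (q : Fld) : Prop :=
  QR q /\ forall a, I a -> Rring (q * a).

Definition ideal_prod (I J : Fld -> Prop) (q : Fld) : Prop :=
  exists s : seq (Fld * Fld),
    List.Forall (fun p => I p.1 /\ J p.2) s /\ q = \sum_(p <- s) p.1 * p.2.

(* product in the group of divisorial fractional ideals *)
Definition div_prod (I J : Fld -> Prop) : Fld -> Prop :=
  colon (colon (ideal_prod I J)).

Definition omega_inv : Fld -> Prop := colon omega.

Fixpoint omega_npow (k : nat) : Fld -> Prop :=
  match k with
  | 0 => Rring
  | k.+1 => div_prod omega (omega_npow k)
  end.
Fixpoint omega_inv_npow (k : nat) : Fld -> Prop :=
  match k with
  | 0 => Rring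
  | k.+1 => div_prod omega_inv (omega_inv_npow k)
  end.
Definition omega_pow (n : int) : Fld -> Prop :=
  match n with
  | Posz k => omega_npow k
  | Negz k => omega_inv_npow k.+1
  end.

End Poset.

(* Everything is graded by exponent vectors xi : P^- -> Z.
   - Laurent monomials are K-linearly independent in the fraction field
     (multiply by a large monomial and compare coefficients of ordinary
     monomials).  Hence a monomial span contains a Laurent polynomial iff it
     contains each of its monomials with nonzero coefficient.
   - Therefore monomial spans are governed by their exponent sets: the ideal
     product of spans is the span of the Minkowski sum, and the colon
     R :_{Q(R)} span A is the span of {e | e + A lies in S^(0)}.
   - On the combinatorial side, S^(a) + S^(b) lies in S^(a+b), and both S^(c)
     and S^(a) + S^(b) (for c = a + b) are "tight": each defining inequality
     of S^(c) is attained by one of their vectors.  The colon set of a tight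
     set for c is exactly S^(-c).
   Consequently the divisorial product of span S^(a) and span S^(b) is
   span S^(a+b), induction gives omega^(n) = span S^(n), and the statement
   about monomials is the independence of Laurent monomials. *)

From Stdlib Require Import FunctionalExtensionality.
From HB Require Import structures.
From mathcomp Require Import all_boot all_order all_algebra zify.
Set Implicit Arguments. Unset Strict Implicit. Unset Printing Implicit Defensive.
Import Order.TTheory GRing.Theory Num.Theory.
Local Open Scope ring_scope.

Section SequenceSums.

(* Sums over a sequence whose elements need not have decidable equality. *)
Lemma eq_big_In (V : nmodType) (T : Type) (s : seq T) (f g : T -> V) :
  (forall p, List.In p s -> f p = g p) -> \sum_(p <- s) f p = \sum_(p <- s) g p.
Proof.
elim: s => [|a s IH] fg; first by rewrite !big_nil.
by rewrite !big_cons fg /=; [rewrite IH // => p sp; apply: fg; right | left].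
Qed.

Lemma leq_In_sum (T : Type) (s : seq T) (f : T -> nat) p :
  List.In p s -> (f p <= \sum_(q <- s) f q)%N.
Proof.
elim: s => [|a s IH] //= [->|sp]; rewrite big_cons; first exact: leq_addr.
exact: leq_trans (IH sp) (leq_addl _ _).
Qed.

Lemma leq_sum_point (T : finType) (f : T -> nat) x : (f x <= \sum_y f y)%N.
Proof. by rewrite (bigD1 x) //= leq_addr. Qed.

Lemma sum_group (R : nmodType) (T : Type) (I : eqType) (key : T -> I)
    (f : T -> R) (u : seq I) (s : seq T) :
  uniq u -> {subset map key s <= u} ->
  \sum_(p <- s) f p = \sum_(k <- u) \sum_(p <- s | key p == k) f p.
Proof.
move=> uniq_u; elim: s => [|a s IH] keys_s.
  by rewrite big_nil big1 // => k _; rewrite big_nil.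
have key_a : key a \in u by apply: keys_s; rewrite /= mem_head.
rewrite big_cons IH => [|k ks]; last by apply: keys_s; rewrite /= inE ks orbT.
transitivity (\sum_(k <- u) ((if key a == k then f a else 0) +
                              \sum_(p <- s | key p == k) f p)).
  have single : \sum_(k <- u | key a == k) f a = f a.
    rewrite -big_filter (@eq_filter _ _ (pred1 (key a))) => [|k]; last by rewrite /= eq_sym.
    by rewrite filter_pred1_uniq // big_seq1.
  by rewrite big_split /= -big_mkcond single.
by apply: eq_bigr => k _; rewrite big_cons; case: eqP => _; rewrite ?add0r.
Qed.

Lemma Forall_map_filter (I T : Type) (R : T -> Prop) (f : I -> T) (Q : pred I)
    (u : seq I) :
  (forall k, Q k -> R (f k)) -> List.Forall R [seq f k | k <- u & Q k].
Proof. by move=> QR; elim: u => [|k u IH] //=; case: ifP => Qk //=; constructor; auto. Qed.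

End SequenceSums.

Section MultivariatePolynomials.
Variable K : fieldType.

Lemma mconstD m (a b : K) : mconst m (a + b) = mconst m a + mconst m b.
Proof. by elim: m => [|m IH] //=; rewrite IH polyCD. Qed.
Lemma mconstM m (a b : K) : mconst m (a * b) = mconst m a * mconst m b.
Proof. by elim: m => [|m IH] //=; rewrite IH polyCM. Qed.
Lemma mconstN m (a : K) : mconst m (- a) = - mconst m a.
Proof. by elim: m => [|m IH] //=; rewrite IH polyCN. Qed.
Lemma mconst1 m : mconst m (1 : K) = 1.
Proof. by elim: m => [|m IH] //=; rewrite IH. Qed.
Lemma mconst0 m : mconst m (0 : K) = 0.
Proof. by elim: m => [|m IH] //=; rewrite IH. Qed.

Lemma mvar_neq0 m i : mvar K m i != 0.
Proof.
elim: m i => [|m IH] [|i] /=;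
  by rewrite ?oner_eq0 ?polyXn_eq0 ?polyC_eq0 ?polyX_eq0.
Qed.

Definition mmono m (e : nat -> nat) : mpoly K m := \prod_(i < m) mvar K m i ^+ e i.

Lemma mmonoS m e : mmono m.+1 e = 'X^(e 0%N) * (mmono m (fun i => e i.+1))%:P.
Proof.
rewrite /mmono big_ord_recl /= rmorph_prod; congr (_ * _).
by apply: eq_bigr => i _; rewrite rmorphXn.
Qed.

Definition agree m (e e' : nat -> nat) : bool := [forall i : 'I_m, e i == e' i].

Lemma agreeS m e e' : agree m.+1 e e' =
  (e 0%N == e' 0%N) && agree m (fun i => e i.+1) (fun i => e' i.+1).
Proof.
apply/forallP/andP => [H|[H0 /forallP H] i].
  split; first exact: (H ord0).
  by apply/forallP => i; exact: (H (lift ord0 i)).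
by case: i => [[|i] lt_i_m] //=; exact: (H (Ordinal (lt_i_m : i < m)%N)).
Qed.

(* By induction
   on the number of variables, comparing coefficients of 'X^(e0 0). *)
Lemma mmono_lin_indep m (s : seq (K * (nat -> nat))) :
  \sum_(p <- s) mconst m p.1 * mmono m p.2 = 0 ->
  forall e0, \sum_(p <- s | agree m p.2 e0) p.1 = 0.
Proof.
elim: m s => [|m IH] s s0 e0.
  rewrite -[RHS]s0; apply: eq_big => [p|p _]; first by apply/forallP => -[].
  by rewrite /mmono big_ord0 mulr1.
pose s' := [seq (p.1, fun i => p.2 i.+1) | p <- s & p.2 0%N == e0 0%N].
have coef_term p : (mconst m.+1 p.1 * mmono m.+1 p.2)`_(e0 0%N) =
    if p.2 0%N == e0 0%N then mconst m p.1 * mmono m (fun i => p.2 i.+1) else 0.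
  by rewrite mmonoS mulrCA -polyCM coefXnM coefC subn_eq0; case: ltngtP.
have s'0 : \sum_(p <- s') mconst m p.1 * mmono m p.2 = 0.
  rewrite /s' big_map big_filter big_mkcond /=.
  transitivity ((\sum_(p <- s) mconst m.+1 p.1 * mmono m.+1 p.2)`_(e0 0%N)).
    by rewrite coef_sum; apply: eq_bigr => p _; rewrite coef_term.
  by rewrite s0 coef0.
have := IH _ s'0 (fun i => e0 i.+1).
rewrite /s' big_map /= big_filter_cond; apply: eq_trans.
by apply: eq_bigl => p; rewrite agreeS.
Qed.

End MultivariatePolynomials.

Section LaurentMonomials.
Variables (d : Order.disp_t) (P : finPOrderType d) (K : fieldType).
Local Notation Exp := (option P -> int).
Local Notation F := (Fld P K).
Local Notation m := (nvars P).
Local Notation tofrac := (@FracField.tofrac (mpoly K m)).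

Definition eadd (a b : Exp) : Exp := fun x => a x + b x.
Definition eneg (a : Exp) : Exp := fun x => - a x.

(* Exponent vectors are not an eqType; we compare them through finfuns. *)
Definition ekey (e : Exp) : {ffun option P -> int} := [ffun x => e x].

Lemma ekey_eqE a b : (ekey a == ekey b) = [forall x, a x == b x].
Proof.
apply/eqP/eqfunP => [eq_ab x | eq_ab]; last by apply/ffunP => x; rewrite !ffunE.
by move/ffunP/(_ x): eq_ab; rewrite !ffunE.
Qed.

Lemma ekey_inj a b : ekey a = ekey b -> a = b.
Proof.
move=> eq_ab; apply: functional_extensionality => x.
by move/ffunP/(_ x): eq_ab; rewrite !ffunE.
Qed.

Lemma ekeyK (k : {ffun option P -> int}) : ekey k = k.
Proof. by apply/ffunP => x; rewrite ffunE. Qed.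

Lemma KcD (a b : K) : Kc P (a + b) = Kc P a + Kc P b.
Proof. by rewrite /Kc mconstD rmorphD. Qed.
Lemma KcM (a b : K) : Kc P (a * b) = Kc P a * Kc P b.
Proof. by rewrite /Kc mconstM rmorphM. Qed.
Lemma KcN (a : K) : Kc P (- a) = - Kc P a.
Proof. by rewrite /Kc mconstN rmorphN. Qed.
Lemma Kc1 : Kc P (1 : K) = 1.
Proof. by rewrite /Kc mconst1 rmorph1. Qed.
Lemma Kc0 : Kc P (0 : K) = 0.
Proof. by rewrite /Kc mconst0 rmorph0. Qed.

Lemma Tvar_neq0 (x : option P) : Tvar K x != 0.
Proof. by rewrite /Tvar tofrac_eq0 mvar_neq0. Qed.

Lemma Tmon_neq0 (a : Exp) : Tmon K a != 0.
Proof. by rewrite /Tmon prodf_seq_neq0; apply/allP => x _; exact: expfz_neq0 (Tvar_neq0 x). Qed.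

Lemma TmonD (a b : Exp) : Tmon K (eadd a b) = Tmon K a * Tmon K b.
Proof. by rewrite /Tmon -big_split; apply: eq_bigr => x _; exact: expfzDr (Tvar_neq0 x). Qed.

Lemma Tmon_eneg (a : Exp) : Tmon K a * Tmon K (eneg a) = 1.
Proof. by rewrite -TmonD /Tmon big1 // => x _; rewrite /eadd /eneg subrr expr0z. Qed.

Lemma Tmon_ekey (e : Exp) : Tmon K (ekey e) = Tmon K e.
Proof. by apply: eq_bigr => x _; rewrite ffunE. Qed.

Definition nat_exps (n : option P -> nat) : nat -> nat :=
  fun i => if @insub _ (fun i => (i < #|{: option P}|)%N) 'I_#|{: option P}| i
           is Some o then n (enum_val o) else 0%N.

Lemma Tmon_nat (n : option P -> nat) :
  Tmon K (fun x => (n x)%:Z) = tofrac (mmono K m (nat_exps n)).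
Proof.
rewrite /Tmon /mmono rmorph_prod (reindex (@enum_rank _)) /=; last first.
  by exists enum_val => i _; rewrite ?enum_rankK ?enum_valK.
by apply: eq_bigr => x _; rewrite rmorphXn /nat_exps valK enum_rankK.
Qed.

Lemma agree_nat_exps (a b : option P -> nat) :
  agree m (nat_exps a) (nat_exps b) = [forall x, a x == b x].
Proof.
apply/forallP/forallP => eq_ab x; last by rewrite /nat_exps valK.
by have := eq_ab (enum_rank x); rewrite /nat_exps valK enum_rankK.
Qed.

Definition lcomb (s : seq (K * Exp)) : F := \sum_(p <- s) Kc P p.1 * Tmon K p.2.
Definition lcoef (s : seq (K * Exp)) (e : Exp) : K :=
  \sum_(p <- s | ekey p.2 == ekey e) p.1.

Lemma Tmon_shift_nat (M : nat) (a : Exp) : (forall x, (`|a x| <= M)%N) ->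
  Tmon K a * Tmon K (fun _ => M%:Z) =
  tofrac (mmono K m (nat_exps (fun x => absz (a x + M%:Z)))).
Proof.
move=> bound_a; rewrite -TmonD -Tmon_nat; apply: eq_bigr => x _.
by congr (_ ^ _); rewrite /eadd; have := bound_a x; lia.
Qed.

(* Linear independence of Laurent monomials: after multiplying by a monomial
   T^M that makes all exponents nonnegative, this is mmono_lin_indep. *)
Lemma lcomb_eq0_coef s e0 : lcomb s = 0 -> lcoef s e0 = 0.
Proof.
move=> s0; pose M := (\sum_(p <- s) \sum_x `|p.2 x|%N + \sum_x `|e0 x|%N)%N.
have bound_s p : List.In p s -> forall x, (`|p.2 x| <= M)%N.
  move=> sp x; apply: leq_trans (leq_addr _ _).
  exact: leq_trans (leq_sum_point (fun x => `|p.2 x|%N) x) (leq_In_sum _ sp).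
have bound_e0 x : (`|e0 x| <= M)%N.
  exact: leq_trans (leq_sum_point (fun x => `|e0 x|%N) x) (leq_addl _ _).
pose nshift (a : Exp) x := absz (a x + M%:Z).
have poly0 : \sum_(p <- [seq (p.1, nat_exps (nshift p.2)) | p <- s])
               mconst m p.1 * mmono K m p.2 = 0.
  apply/eqP; rewrite -tofrac_eq0 rmorph_sum big_map; apply/eqP.
  transitivity (lcomb s * Tmon K (fun _ => M%:Z)); last by rewrite s0 mul0r.
  rewrite /lcomb mulr_suml; apply: eq_big_In => p sp /=.
  by rewrite rmorphM -mulrA (Tmon_shift_nat (bound_s _ sp)).
have := mmono_lin_indep poly0 (nat_exps (nshift e0)).
rewrite big_map; apply: eq_trans.
rewrite /lcoef big_mkcond [RHS]big_mkcond; apply: eq_big_In => p sp /=.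
rewrite agree_nat_exps ekey_eqE; congr (if _ then _ else _); apply: eq_forallb => x.
have := bound_s _ sp x; have := bound_e0 x; rewrite /nshift => ? ?.
by apply/eqP/eqP => [->|] //; lia.
Qed.

Definition lneg (s : seq (K * Exp)) : seq (K * Exp) := [seq (- p.1, p.2) | p <- s].

Lemma lcomb_sub s t : lcomb (s ++ lneg t) = lcomb s - lcomb t.
Proof.
rewrite /lcomb big_cat big_map -sumrN; congr (_ + _).
by apply: eq_bigr => p _; rewrite /= KcN mulNr.
Qed.

Lemma lcoef_sub s t e : lcoef (s ++ lneg t) e = lcoef s e - lcoef t e.
Proof. by rewrite /lcoef big_cat big_map -sumrN. Qed.

Lemma lcoef_unique s t e : lcomb s = lcomb t -> lcoef s e = lcoef t e.
Proof.
move=> eq_st; apply/eqP; rewrite -subr_eq0 -lcoef_sub; apply/eqP/lcomb_eq0_coef.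
by rewrite lcomb_sub eq_st subrr.
Qed.

Lemma lcoef_support s e : lcoef s e != 0 -> exists2 p, List.In p s & p.2 = e.
Proof.
elim: s => [|a s IH]; first by rewrite /lcoef big_nil eqxx.
rewrite /lcoef big_cons; case: ifP => [/eqP/ekey_inj a_e _|_ /IH [p sp p_e]].
  by exists a; [left | ].
by exists p => //; right.
Qed.

Lemma lcomb_collect s : lcomb s =
  \sum_(k <- undup [seq ekey p.2 | p <- s]) Kc P (lcoef s k) * Tmon K k.
Proof.
rewrite /lcomb (sum_group (key := fun p : K * Exp => ekey p.2) _
                (undup_uniq [seq ekey p.2 | p <- s])) => [|k]; last by rewrite mem_undup.
apply: eq_bigr => k _; rewrite /lcoef ekeyK (big_morph (@Kc d P K) KcD Kc0) mulr_suml.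
by apply: eq_bigr => p /eqP <-; rewrite Tmon_ekey.
Qed.

Definition lshift (a : Exp) (s : seq (K * Exp)) : seq (K * Exp) :=
  [seq (p.1, eadd p.2 a) | p <- s].

Lemma lcomb_shift a s : lcomb (lshift a s) = lcomb s * Tmon K a.
Proof.
by rewrite /lcomb big_map mulr_suml; apply: eq_bigr => p _; rewrite /= TmonD mulrA.
Qed.

Lemma lcoef_shift a s e : lcoef (lshift a s) (eadd e a) = lcoef s e.
Proof.
rewrite /lcoef big_map; apply: eq_bigl => p /=; rewrite !ekey_eqE.
by apply: eq_forallb => x; rewrite /eadd (inj_eq (addIr _)).
Qed.

End LaurentMonomials.

Section ChainInequalities.
Variables (d : Order.disp_t) (P : finPOrderType d).
Local Notation Exp := (option P -> int).

Lemma Sn_add (a b : int) (x y : Exp) : Sn a x -> Sn b y -> Sn (a + b) (eadd x y).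
Proof.
move=> [pos_x chain_x] [pos_y chain_y]; split => [z|C maxC]; first exact: lerD.
by rewrite /eadd big_split /= addrACA; apply: lerD; [exact: chain_x | exact: chain_y].
Qed.

Lemma sum_const_chain (C : {set P}) (N : int) : 0 <= N -> \sum_(b in C) N <= N * #|P|%:R.
Proof.
move=> N0; rewrite sumr_const -[N *+ _]mulr_natr.
by apply: (ler_wpM2l N0); rewrite ler_nat max_card.
Qed.

Lemma sum_in_le_total (C : {set P}) (g : P -> int) :
  (forall b, 0 <= g b) -> \sum_(b in C) g b <= \sum_b g b.
Proof.
move=> g0; rewrite [leRHS](bigID (fun b => b \in C)) /= lerDl.
by apply: sumr_ge0 => b _.
Qed.

Definition tall (N : int) : Exp :=
  fun o => if o is Some _ then N else N * (#|P|.+1)%:R.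

Lemma tall_Sn (c N : int) : 0 <= N -> c <= N -> Sn c (tall N).
Proof.
move=> N0 le_cN; split => [//|C _].
rewrite /tall -[#|P|.+1]addn1 natrD mulrDr mulr1.
exact: lerD (sum_const_chain C N0) le_cN.
Qed.

Lemma Sn_exists (c : int) : exists xi : Exp, Sn c xi.
Proof. by exists (tall `|c|); apply: tall_Sn => //; exact: ler_norm. Qed.

Lemma bounded_Sn (M : nat) (a : Exp) :
  (forall x, (`|a x| <= M)%N) -> Sn (- (M%:Z * (#|P|.+1)%:R)) a.
Proof.
move=> bound_a; have M0 : 0 <= M%:Z by [].
split => [x|C _].
  have := bound_a (Some x); move: #|P| => k; rewrite -[k.+1]addn1 natrD; nia.
have sum_le : \sum_(b in C) a (Some b) <= \sum_(b in C) M%:Z.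
  by apply: ler_sum => b _; have := bound_a (Some b); lia.
have := le_trans sum_le (sum_const_chain C M0); have := bound_a None.
by move: #|P| (\sum_(b in C) a (Some b)) => k S; rewrite -[k.+1]addn1 natrD; nia.
Qed.

(* Any finitely many exponent vectors are moved into S^(0) by one common
   shift; this is why every Laurent polynomial lies in Q(R). *)
Lemma shift_into_S0 (s : seq Exp) :
  exists b : Exp, Sn 0 b /\ forall e, List.In e s -> Sn 0 (eadd e b).
Proof.
pose M := (\sum_(e <- s) \sum_x `|e x|%N)%N.
pose N := M%:Z * (#|P|.+1)%:R.
have N0 : 0 <= N by rewrite mulr_ge0.
exists (tall N); split; first exact: tall_Sn.
move=> e se; have := Sn_add (bounded_Sn (M := M) (a := e) _) (tall_Sn N0 (lexx N)).
rewrite addNr; apply => x.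
exact: leq_trans (leq_sum_point (fun x => `|e x|%N) x) (leq_In_sum _ se).
Qed.

Lemma Sn_lower (c : int) (xi xi' : Exp) :
  Sn c xi -> (forall x, c <= xi' (Some x) <= xi (Some x)) -> xi' None = xi None ->
  Sn c xi'.
Proof.
move=> [_ chain_xi] between same_top; split => [x|C maxC].
  by have /andP[] := between x.
rewrite same_top; apply: le_trans (chain_xi C maxC); rewrite lerD2r.
by apply: ler_sum => x _; have /andP[] := between x.
Qed.

Lemma tight_point (c : int) (x : P) : exists xi : Exp, Sn c xi /\ xi (Some x) = c.
Proof.
have N0 : 0 <= `|c| by [].
exists (fun o => if o == Some x then c else tall `|c| o); rewrite eqxx; split => //.
apply: Sn_lower (tall_Sn N0 (ler_norm c)) _ _ => // y.
by case: eqP => _; rewrite ?lexx ?ler_norm.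
Qed.

Lemma sum_off_chain (C C' : {set P}) (y0 : P) (N a : int) :
  0 <= N -> N * #|P|%:R + N <= a -> y0 \in C -> y0 \notin C' ->
  \sum_(b in C') (if b \in C then a else N) <= a * #|C|%:R.
Proof.
move=> N0 big_a y0C y0C'.
have a0 : 0 <= a by apply: le_trans big_a; rewrite addr_ge0 ?mulr_ge0.
pose g b := (if b \in C :\ y0 then a else 0) + N.
have g0 b : 0 <= g b by rewrite /g; case: ifP; rewrite ?add0r ?addr_ge0.
apply: (le_trans (y := \sum_(b in C') g b)).
  apply: ler_sum => b bC'; rewrite /g in_setD1.
  have -> : (b != y0) by apply: contraNneq y0C' => <-.
  by case: (b \in C); rewrite /= ?lerDl ?add0r.
apply: le_trans (sum_in_le_total C' g0) _.
rewrite /g big_split /= -big_mkcond /= (cardsD1 y0 C) y0C !sumr_const add1n.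
rewrite mulr_natr mulrS [in leRHS]addrC lerD2l -mulr_natr.
by apply: le_trans big_a; rewrite lerDl.
Qed.

(* Tightness at a maximal chain: some xi in S^(c) has
   xi(-infinity) - sum_C xi = c.  Take xi = a on C, |c| off C, with a large;
   any other maximal chain misses a point of C, so its sum is smaller. *)
Lemma tight_chain (c : int) (C : {set P}) : is_maximal_chain C ->
  exists xi : Exp, Sn c xi /\ xi None - \sum_(b in C) xi (Some b) = c.
Proof.
move=> [_ maxC]; pose N := `|c|; pose a := tall N None.
have N0 : 0 <= N by [].
have big_a : N * #|P|%:R + N <= a by rewrite /a /tall -[#|P|.+1]addn1 natrD mulrDr mulr1.
have le_Na : N <= a by apply: le_trans big_a; rewrite lerDr mulr_ge0.
pose xi : Exp := fun o => if o is Some y then (if y \in C then a else N) else a * #|C|%:R + c.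
have sumC : \sum_(b in C) xi (Some b) = a * #|C|%:R.
  rewrite (eq_bigr (fun _ => a)) => [|b bC]; last by rewrite /xi bC.
  by rewrite sumr_const mulr_natr.
exists xi; split; last by rewrite sumC addrAC subrr add0r.
split => [y|C' [chainC' _]].
  by rewrite /xi; case: (y \in C); [apply: le_trans le_Na |]; exact: ler_norm.
rewrite /= lerD2r; have [subCC'|/subsetPn [y0 y0C y0C']] := boolP (C \subset C').
  by rewrite (maxC C' chainC' subCC') sumC.
exact: sum_off_chain N0 big_a y0C y0C'.
Qed.

End ChainInequalities.

Section MonomialIdeals.
Variables (d : Order.disp_t) (P : finPOrderType d) (K : fieldType).
Local Notation Exp := (option P -> int).
Local Notation F := (Fld P K).
Local Notation mspan := (@monspan d P K).

Lemma span_ind (A : Exp -> Prop) (Q : F -> Prop) :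
  Q 0 -> (forall c e, A e -> Q (Kc P c * Tmon K e)) ->
  (forall x y, Q x -> Q y -> Q (x + y)) -> forall q, mspan A q -> Q q.
Proof.
move=> Q0 Qmon QD q [s [As ->]]; elim: s As => [|a s IH] As; first by rewrite big_nil.
by inversion As; subst; rewrite big_cons; apply: QD; [exact: Qmon | exact: IH].
Qed.

Lemma span0 (A : Exp -> Prop) : mspan A 0.
Proof. by exists [::]; rewrite big_nil. Qed.

Lemma span_add (A : Exp -> Prop) x y : mspan A x -> mspan A y -> mspan A (x + y).
Proof.
move=> [s [As ->]] [t [At ->]]; exists (s ++ t); split; last by rewrite big_cat.
exact/List.Forall_app.
Qed.

Lemma span_mon (A : Exp -> Prop) c e : A e -> mspan A (Kc P c * Tmon K e).
Proof. by move=> Ae; exists [:: (c, e)]; split; [constructor | rewrite big_seq1]. Qed.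

Lemma span_mon1 (A : Exp -> Prop) e : A e -> mspan A (Tmon K e).
Proof. by move=> /(span_mon 1); rewrite Kc1 mul1r. Qed.

Lemma span_mono (A B : Exp -> Prop) q :
  (forall e, A e -> B e) -> mspan A q -> mspan B q.
Proof.
move=> AB; apply: span_ind; [exact: span0 | move=> c e /AB; exact: span_mon | exact: span_add].
Qed.

Lemma span_ext (A B : Exp -> Prop) :
  (forall e, A e <-> B e) -> forall q, mspan A q <-> mspan B q.
Proof. by move=> AB q; split; apply: span_mono => e /AB. Qed.

Lemma span_support (A : Exp -> Prop) s e :
  mspan A (lcomb s) -> lcoef s e != 0 -> A e.
Proof.
move=> [t [At eq_st]]; rewrite (lcoef_unique e eq_st) => /lcoef_support [p tp <-].
by move/List.Forall_forall: At; apply.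
Qed.

Lemma span_of_support (A : Exp -> Prop) s :
  (forall e, lcoef s e != 0 -> A e) -> mspan A (lcomb s).
Proof.
move=> supp_A; pose u := undup [seq ekey p.2 | p <- s].
exists [seq (lcoef s k, fun_of_fin k) | k : {ffun option P -> int} <- u & lcoef s k != 0].
split.
  by apply: Forall_map_filter => k /supp_A.
rewrite lcomb_collect big_map big_filter /= [RHS]big_rmcond // => k /negbNE/eqP ->.
by rewrite Kc0 mul0r.
Qed.

Lemma span_monomial (A : Exp -> Prop) e : mspan A (Tmon K e) <-> A e.
Proof.
split; last exact: span_mon1.
have -> : Tmon K e = lcomb [:: (1, e)] by rewrite /lcomb big_seq1 Kc1 mul1r.
by move/span_support; apply; rewrite /lcoef big_cons big_nil eqxx /= addr0 oner_neq0.
Qed.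

Definition esum (A B : Exp -> Prop) (e : Exp) : Prop :=
  exists a b, A a /\ B b /\ e = eadd a b.

Lemma span_mul (A B : Exp -> Prop) q r :
  mspan A q -> mspan B r -> mspan (esum A B) (q * r).
Proof.
move=> Aq Br; move: q Aq; apply: span_ind.
- by rewrite mul0r; exact: span0.
- move=> c a Aa; move: r Br; apply: span_ind.
  + by rewrite mulr0; exact: span0.
  + move=> c' b Bb; rewrite mulrACA -KcM -TmonD; apply: span_mon.
    by exists a, b.
  + by move=> x y Ax Ay; rewrite mulrDr; exact: span_add.
- by move=> x y Ax Ay; rewrite mulrDl; exact: span_add.
Qed.

Lemma ideal_prod_span (A B : Exp -> Prop) q :
  ideal_prod (mspan A) (mspan B) q <-> mspan (esum A B) q.
Proof.
split.
  move=> [s [AB_s ->]]; elim: s AB_s => [|p s IH] AB_s; first by rewrite big_nil; exact: span0.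
  inversion AB_s as [|? ? [Ap Bp] AB_s']; subst.
  by rewrite big_cons; apply: span_add; [exact: span_mul | exact: IH].
move: q; apply: span_ind.
- by exists [::]; split => //; rewrite big_nil.
- move=> c e [a [b [Aa [Bb ->]]]].
  exists [:: (Kc P c * Tmon K a, Tmon K b)]; split.
    by constructor => //; split; [exact: span_mon | exact: span_mon1].
  by rewrite big_seq1 TmonD mulrA.
- move=> x y [s [AB_s ->]] [t [AB_t ->]]; exists (s ++ t); split; last by rewrite big_cat.
  exact/List.Forall_app.
Qed.

Lemma lcomb_in_QR (s : seq (K * Exp)) : QR (lcomb s).
Proof.
have [b [b_S0 shift_S0]] := shift_into_S0 [seq p.2 | p <- s].
exists (lcomb (lshift b s)), (Tmon K b); split; last split.
- exists (lshift b s); split => //; apply/List.Forall_forall.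
  move=> p /List.in_map_iff [p' [<- sp']] /=; apply: shift_S0.
  by apply/List.in_map_iff; exists p'.
- exact: span_mon1.
- by rewrite Tmon_neq0 lcomb_shift mulfK // Tmon_neq0.
Qed.

Definition colset (A : Exp -> Prop) (e : Exp) : Prop :=
  forall a, A a -> Sn 0 (eadd e a).

Lemma colon_span (A : Exp -> Prop) : (exists a, A a) ->
  forall q, colon (mspan A) q <-> mspan (colset A) q.
Proof.
move=> [a0 A_a0] q; split.
  move=> [_ colon_q]; have [t [_ q_a0]] := colon_q _ (span_mon1 A_a0).
  change (q * Tmon K a0 = lcomb t) in q_a0.
  have qE : q = lcomb (lshift (eneg a0) t).
    by rewrite lcomb_shift -q_a0 -mulrA Tmon_eneg mulr1.
  rewrite qE; apply: span_of_support => e coef_e a A_a.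
  apply: (span_support (s := lshift a (lshift (eneg a0) t))); last by rewrite lcoef_shift.
  by rewrite lcomb_shift -qE; exact: colon_q _ (span_mon1 A_a).
move=> col_q; split; first by case: col_q => s [_ ->]; exact: lcomb_in_QR.
move=> r A_r; apply: span_mono (span_mul col_q A_r) => e [x [y [col_x [A_y ->]]]].
exact: col_x.
Qed.

Definition tight (A : Exp -> Prop) (c : int) : Prop :=
  [/\ forall a, A a -> Sn c a,
      forall x : P, exists a, A a /\ a (Some x) = c,
      forall C : {set P}, is_maximal_chain C ->
        exists a, A a /\ a None - \sum_(b in C) a (Some b) = c
    & exists a, A a].

Lemma colset_tight (A : Exp -> Prop) c : tight A c ->
  forall e, colset A e <-> Sn (- c) e.
Proof.
move=> [A_Sn tight_x tight_C _] e; split => [col_e|Se a A_a]; last first.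
  by have := Sn_add Se (A_Sn a A_a); rewrite addNr.
split => [x|C maxC].
  have [a [A_a ax]] := tight_x x; have [pos _] := col_e a A_a.
  by have := pos x; rewrite /eadd ax; lia.
have [a [A_a aC]] := tight_C C maxC; have [_ chain] := col_e a A_a.
move: (chain C maxC) aC; rewrite /eadd big_split /= addr0.
by move: (\sum_(b in C) e (Some b)) (\sum_(b in C) a (Some b)) => s1 s2; lia.
Qed.

Lemma tight_Sn c : tight (Sn c) c.
Proof. by split => //; [exact: tight_point | exact: tight_chain | exact: Sn_exists]. Qed.

Lemma tight_esum a b : tight (esum (Sn a) (Sn b)) (a + b).
Proof.
split.
- by move=> e [x [y [Sx [Sy ->]]]]; exact: Sn_add.
- move=> x; have [u [Su ux]] := tight_point a x; have [v [Sv vx]] := tight_point b x.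
  by exists (eadd u v); split; [exists u, v | rewrite /eadd ux vx].
- move=> C maxC; have [u [Su uC]] := tight_chain a maxC; have [v [Sv vC]] := tight_chain b maxC.
  exists (eadd u v); split; first by exists u, v.
  by rewrite /eadd big_split /= opprD addrACA uC vC.
- have [u Su] := Sn_exists P a; have [v Sv] := Sn_exists P b.
  by exists (eadd u v), u, v.
Qed.

Lemma colon_tight (A : Exp -> Prop) c : tight A c ->
  forall q, colon (mspan A) q <-> mspan (Sn (- c)) q.
Proof.
move=> tA q; have [_ _ _ A_ne] := tA.
by rewrite colon_span //; apply: span_ext; exact: colset_tight.
Qed.

Lemma colon_ext (I J : F -> Prop) :
  (forall q, I q <-> J q) -> forall q, colon I q <-> colon J q.
Proof. by move=> IJ q; split => -[QRq col_q]; split => // a /IJ; exact: col_q. Qed.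

Lemma div_prod_ext (I I' J J' : F -> Prop) :
  (forall q, I q <-> I' q) -> (forall q, J q <-> J' q) ->
  forall q, div_prod I J q <-> div_prod I' J' q.
Proof.
move=> II' JJ'; apply: colon_ext; apply: colon_ext => q.
by split => -[s [IJ_s ->]]; exists s; split => //; move: IJ_s; apply: List.Forall_impl;
  move=> p [/II' ? /JJ' ?].
Qed.

(* Divisorial product of monomial spans of S^(a) and S^(b): the ideal
   product is span(S^(a) + S^(b)), its colon is span S^(-(a+b)) by
   tightness, and the second colon is span S^(a+b). *)
Lemma div_prod_Sn a b q :
  div_prod (mspan (Sn a)) (mspan (Sn b)) q <-> mspan (Sn (a + b)) q.
Proof.
have colon_prod q' : colon (ideal_prod (mspan (Sn a)) (mspan (Sn b))) q' <->
    mspan (Sn (- (a + b))) q'.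
  rewrite -(colon_tight (tight_esum a b)); apply: colon_ext => q''.
  exact: ideal_prod_span.
by rewrite /div_prod (colon_ext colon_prod) (colon_tight (tight_Sn _)) opprK.
Qed.

Lemma omega_npowE k q : omega_npow (K := K) (P := P) k q <-> mspan (Sn k%:Z) q.
Proof.
elim: k q => [|k IH] q //=.
by rewrite (div_prod_ext (I' := mspan (Sn 1)) _ IH) // div_prod_Sn -[k.+1]add1n PoszD.
Qed.

Lemma omega_inv_npowE k q :
  omega_inv_npow (K := K) (P := P) k q <-> mspan (Sn (- k%:Z)) q.
Proof.
have omega_invE q' : omega_inv (K := K) (P := P) q' <-> mspan (Sn (-1)) q'.
  exact: colon_tight (tight_Sn 1) q'.
elim: k q => [|k IH] q /=; first by rewrite oppr0.
by rewrite (div_prod_ext omega_invE IH) div_prod_Sn -opprD -[k.+1]add1n PoszD.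
Qed.

Lemma omega_powE n q : omega_pow (K := K) (P := P) n q <-> mspan (Sn n) q.
Proof.
case: n => k; first exact: omega_npowE.
by rewrite /omega_pow omega_inv_npowE NegzE.
Qed.

End MonomialIdeals.

Theorem mainTheorem2 (d : Order.disp_t) (P : finPOrderType d) (K : fieldType) (n : int) :
  (forall xi : option P -> int,
     @omega_pow d P K n (@Tmon d P K xi) <-> @Sn d P n xi) /\
  (forall q : Fld P K,
     @omega_pow d P K n q <-> @monspan d P K (@Sn d P n) q).
Proof.
split=> [xi|q]; last exact: omega_powE.
by rewrite omega_powE span_monomial.
Qed.
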